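(* Let $\Omega_{2,2}$ be the co-invariant lattice of a symplectic action of $(\mathbb Z/2\mathbb Z)^2$ on a K3 surface, with discriminant group $A_{\Omega_{2,2}}\cong(\mathbb Z/2\mathbb Z)^6\times(\mathbb Z/4\mathbb Z)^2$ and discriminant quadratic form $q:A_{\Omega_{2,2}}\to\mathbb Q/2\mathbb Z$. Consider the equivalence relation on $A_{\Omega_{2,2}}$ where $r\sim s$ if $\bar\psi(r)=s$ for the isometry $\bar\psi$ of $A_{\Omega_{2,2}}$ induced by some isometry $\psi\in O(\Omega_{2,2})$. Then the non-zero elements of $A_{\Omega_{2,2}}$ split into exactly six equivalence classes, which, recorded as triples (order of the element, value of $q$, cardinality of the class), are: $(2,0,108)$, $(2,0,3)$, $(2,1,108)$, $(2,1,36)$, $(4,1/2,384)$, $(4,3/2,384)$.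
   Context: An action on a K3 surface $X$ is symplectic if it acts trivially on $H^{2,0}$. The co-invariant lattice $\Omega_{2,2}$ is the orthogonal complement in $H^2(X,\mathbb Z)$ of the $(\mathbb Z/2\mathbb Z)^2$-invariant lattice; it is negative definite of rank 12 and its isometry class does not depend on $X$. For an even lattice $S$, $A_S=S^\vee/S$ and $q_S(x+S)=x^2 \bmod 2\mathbb Z$. *)

From HB Require Import structures.
From mathcomp Require Import all_boot all_order all_algebra.

Set Implicit Arguments.
Unset Strict Implicit.
Unset Printing Implicit Defensive.

Import Order.TTheory GRing.Theory Num.Theory.
Local Open Scope ring_scope.

(* We model Omega_{2,2} as Z^12 with the (negative definite, even) Gram      *)
(* matrix below, i.e. the bilinear form is (x, y) |-> x^T G y.               *)
(* The matrix was obtained as the co-invariant lattice of a   *)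
(* subgroup (Z/2Z)^2 of M23 acting on the Leech lattice, scaled by -1        *)
(* (Kondo / Hashimoto: Omega_G ~= Lambda_G(-1)).  Its discriminant group is  *)
(* (Z/2Z)^6 x (Z/4Z)^2.                                                      *)

Definition Omega22_rows : seq (seq int) :=
  [:: [:: -4; -2; 2; -1; 2; -2; -2; -2; 2; 2; 2; -2];
  [:: -2; -4; 2; -2; 2; 0; 0; 0; 0; 1; 1; -1];
  [:: 2; 2; -4; 0; -2; 2; 2; 2; 0; -2; -2; 2];
  [:: -1; -2; 0; -4; 0; 1; 0; 1; -1; -1; -1; 1];
  [:: 2; 2; -2; 0; -4; 2; 0; 2; -2; -1; -1; 1];
  [:: -2; 0; 2; 1; 2; -4; -2; -2; 2; 1; 1; -1];
  [:: -2; 0; 2; 0; 0; -2; -4; -2; 0; 1; 1; -1];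
  [:: -2; 0; 2; 1; 2; -2; -2; -4; 2; 2; 2; -2];
  [:: 2; 0; 0; -1; -2; 2; 0; 2; -4; -1; -1; 1];
  [:: 2; 1; -2; -1; -1; 1; 1; 2; -1; -4; -2; 2];
  [:: 2; 1; -2; -1; -1; 1; 1; 2; -1; -2; -4; 2];
  [:: -2; -1; 2; 1; 1; -1; -1; -2; 1; 2; 2; -4]].

Definition Omega22_gram : 'M[rat]_12 :=
  \matrix_(i < 12, j < 12) (((nth [::] Omega22_rows i)`_j)%:~R : rat).

Definition intmx (m n : nat) (M : 'M[rat]_(m, n)) : Prop :=
  forall i j, M i j \is a Num.int.

(* Vectors of Omega_{2,2} (x) Q are column vectors of coordinates in the    *)
(* lattice basis; the lattice itself is the set of integral vectors.         *)
Definition in_Omega (v : 'cV[rat]_12) : Prop := intmx v.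

Definition in_dual (v : 'cV[rat]_12) : Prop := intmx (Omega22_gram *m v).

Definition sqnorm (v : 'cV[rat]_12) : rat := (v^T *m Omega22_gram *m v) 0 0.

Definition disc_q_is (v : 'cV[rat]_12) (c : rat) : Prop :=
  (sqnorm v - c) / 2 \is a Num.int.

Definition disc_order_is (v : 'cV[rat]_12) (k : nat) : Prop :=
  (0 < k)%N /\ in_Omega (k%:R *: v) /\
  forall m : nat, (0 < m)%N -> (m < k)%N -> ~ in_Omega (m%:R *: v).

(* psi in O(Omega_{2,2}): an integral matrix preserving the Gram matrix     *)
(* (it is then automatically invertible over Z, since det psi = +-1).        *)
Definition isometry_Omega (psi : 'M[rat]_12) : Prop :=
  intmx psi /\ psi^T *m Omega22_gram *m psi = Omega22_gram.

Definition disc_equiv (r s : 'cV[rat]_12) : Prop :=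
  exists psi, isometry_Omega psi /\ in_Omega (psi *m r - s).

Definition disc_class_card (r : 'cV[rat]_12) (n : nat) : Prop :=
  exists s : seq 'cV[rat]_12,
    [/\ size s = n,
        (forall x, x \in s -> in_dual x /\ disc_equiv r x),
        (forall i j, (i < n)%N -> (j < n)%N -> i <> j ->
           ~ in_Omega (nth 0 s i - nth 0 s j)) &
        (forall x, in_dual x -> disc_equiv r x ->
           exists2 y, y \in s & in_Omega (x - y))].

From HB Require Import structures.
From mathcomp Require Import all_boot all_order all_algebra.
From mathcomp Require Import zify ring lra.
From Stdlib Require BinNat.

Set Implicit Arguments.
Unset Strict Implicit.
Unset Printing Implicit Defensive.
Import Order.TTheory GRing.Theory Num.Theory.
Local Open Scope ring_scope.

(* The discriminant group A = Omega^vee / Omega has 2^6 * 4^2 = 1024 elements.  Starting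
   from six explicit representatives, a breadth-first search under two explicit isometries
   of Omega produces six orbits in A, of sizes 108, 3, 108, 36, 384 and 384.  Together with 0
   they exhaust A, because their union is closed under translation by the columns of G^-1,
   which generate A; and each orbit lies in a single ~-class.  Distinct orbits lie in
   distinct classes because O(Omega) preserves q, which separates all of them except two
   pairs: the classes (2,0,_) differ in whether they lie in 2A, and the classes (2,1,_) in
   whether the coset contains a vector of square -1.  The latter is excluded for one coset
   by rational certificates -G = f f^T + L^T D L with D >= 0, which confine every
   coordinate of F y to {1/2, -1/2} for an integral invertible F, leaving 2^12 candidates.
   All properties of the computed lists are verified by evaluation, so the search itself
   needs no correctness proof. *)

Section IntegralMatrices.
Variables m n p : nat.

Lemma intmx0 : intmx (0 : 'M[rat]_(m, n)).
Proof. by move=> i j; rewrite mxE. Qed.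

Lemma intmx1 : intmx (1%:M : 'M[rat]_n).
Proof. by move=> i j; rewrite mxE; case: (i == j). Qed.

Lemma intmxD (A B : 'M[rat]_(m, n)) : intmx A -> intmx B -> intmx (A + B).
Proof. by move=> HA HB i j; rewrite mxE rpredD. Qed.

Lemma intmxN (A : 'M[rat]_(m, n)) : intmx A -> intmx (- A).
Proof. by move=> HA i j; rewrite mxE rpredN. Qed.

Lemma intmxB (A B : 'M[rat]_(m, n)) : intmx A -> intmx B -> intmx (A - B).
Proof. by move=> HA HB; apply: intmxD (intmxN HB). Qed.

Lemma intmxZ c (A : 'M[rat]_(m, n)) : c \is a Num.int -> intmx A -> intmx (c *: A).
Proof. by move=> Hc HA i j; rewrite mxE rpredM. Qed.

Lemma intmx_tr (A : 'M[rat]_(m, n)) : intmx A -> intmx A^T.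
Proof. by move=> HA i j; rewrite mxE. Qed.

Lemma intmxM (A : 'M[rat]_(m, n)) (B : 'M[rat]_(n, p)) :
  intmx A -> intmx B -> intmx (A *m B).
Proof. by move=> HA HB i j; rewrite mxE rpred_sum // => k _; rewrite rpredM. Qed.

End IntegralMatrices.

Lemma det_intmx n (A : 'M[rat]_n) : intmx A -> \det A \is a Num.int.
Proof.
move=> HA; apply: rpred_sum => s _; rewrite rpredM ?rpred_prod //.
by rewrite rpredX // rpredN rpred1.
Qed.

Lemma adj_intmx n (A : 'M[rat]_n) : intmx A -> intmx (\adj A).
Proof.
move=> HA i j; rewrite mxE rpredM ?rpredX ?rpredN ?rpred1 //.
by apply: det_intmx => k l; rewrite !mxE.
Qed.

(** * Discriminant forms of even lattices *)

Definition lattice_isometry n (G psi : 'M[rat]_n) : Prop :=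
  intmx psi /\ psi^T *m G *m psi = G.

Definition dual_vec n (G : 'M[rat]_n) (v : 'cV[rat]_n) : Prop := intmx (G *m v).

Definition disc_rel n (G : 'M[rat]_n) (r s : 'cV[rat]_n) : Prop :=
  exists psi, lattice_isometry G psi /\ intmx (psi *m r - s).

Definition bform n (G : 'M[rat]_n) (u v : 'cV[rat]_n) : rat := (u^T *m G *m v) 0 0.

Definition disc_q n (G : 'M[rat]_n) (v : 'cV[rat]_n) (c : rat) : Prop :=
  (bform G v v - c) / 2 \is a Num.int.

Definition disc_twice n (G : 'M[rat]_n) (x : 'cV[rat]_n) : Prop :=
  exists2 u, dual_vec G u & intmx (x - 2%:R *: u).

Definition coset_has_norm n (G : 'M[rat]_n) (x : 'cV[rat]_n) (c : rat) : Prop :=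
  exists2 y, intmx (y - x) & bform G y y = c.

Section Lattice.
Variables (n : nat) (G : 'M[rat]_n).
Hypothesis G_sym : G^T = G.
Hypothesis G_int : intmx G.
Hypothesis G_even : forall i, G i i / 2 \is a Num.int.
Hypothesis G_det : \det G != 0.

Lemma lattice_isometry1 : lattice_isometry G 1%:M.
Proof. by split; [exact: intmx1 | rewrite trmx1 mul1mx mulmx1]. Qed.

Lemma lattice_isometryM phi psi :
  lattice_isometry G phi -> lattice_isometry G psi -> lattice_isometry G (psi *m phi).
Proof.
case=> Iphi Ephi [Ipsi Epsi]; split; first exact: intmxM.
by rewrite trmx_mul -!mulmxA (mulmxA psi^T) (mulmxA (psi^T *m G)) Epsi mulmxA.
Qed.

(* [det psi ^+ 2 = 1], so [det psi *: adj psi] is an integral inverse. *)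
Lemma lattice_isometryV psi : lattice_isometry G psi ->
  exists2 phi, lattice_isometry G phi & phi *m psi = 1%:M /\ psi *m phi = 1%:M.
Proof.
case=> Ipsi Epsi; set d := \det psi.
have d2 : d * d = 1.
  have := congr1 determinant Epsi; rewrite !det_mulmx det_tr -/d => E.
  by apply: (mulIf G_det); rewrite mul1r -[RHS]E; ring.
have phiK : (d *: \adj psi) *m psi = 1%:M.
  by rewrite -scalemxAl mul_adj_mx scale_scalar_mx d2.
have Kphi : psi *m (d *: \adj psi) = 1%:M by exact: mulmx1C.
exists (d *: \adj psi) => //; split.
  exact: intmxZ (det_intmx Ipsi) (adj_intmx Ipsi).
rewrite -{1}Epsi.
have -> : (d *: \adj psi)^T *m (psi^T *m G *m psi) *m (d *: \adj psi)
    = (psi *m (d *: \adj psi))^T *m G *m (psi *m (d *: \adj psi)).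
  by rewrite trmx_mul !mulmxA.
by rewrite Kphi trmx1 mul1mx mulmx1.
Qed.

Lemma lattice_dual v : intmx v -> dual_vec G v.
Proof. exact: intmxM. Qed.

Lemma lattice_isometry_dual psi v :
  lattice_isometry G psi -> dual_vec G v -> dual_vec G (psi *m v).
Proof.
move=> Ipsi Hv; have [phi [Iphi _] [_ Kphi]] := lattice_isometryV Ipsi.
rewrite /dual_vec mulmxA.
have -> : G *m psi = phi^T *m G.
  by case: Ipsi => _ E; rewrite -{2}E !mulmxA -trmx_mul Kphi trmx1 mul1mx.
by rewrite -mulmxA; apply: intmxM (intmx_tr Iphi) Hv.
Qed.

Lemma disc_rel_refl r : disc_rel G r r.
Proof.
by exists 1%:M; split; [exact: lattice_isometry1 | rewrite mul1mx subrr; exact: intmx0].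
Qed.

Lemma disc_rel_trans r s t : disc_rel G r s -> disc_rel G s t -> disc_rel G r t.
Proof.
case=> [phi [Iphi Hrs]] [psi [Ipsi Hst]].
exists (psi *m phi); split; first exact: lattice_isometryM.
have -> : psi *m phi *m r - t = psi *m (phi *m r - s) + (psi *m s - t).
  by rewrite mulmxBr mulmxA addrA subrK.
by apply: intmxD Hst; apply: intmxM Hrs; case: Ipsi.
Qed.

Lemma disc_rel_sym r s : disc_rel G r s -> disc_rel G s r.
Proof.
case=> psi [Ipsi Hrs]; have [phi Iphi [phiK _]] := lattice_isometryV Ipsi.
exists phi; split => //.
have -> : phi *m s - r = - (phi *m (psi *m r - s)).
  by rewrite mulmxBr mulmxA phiK mul1mx opprB.
by apply/intmxN/intmxM => //; case: Iphi.
Qed.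

Lemma disc_rel_translate r s t : disc_rel G r s -> intmx (t - s) -> disc_rel G r t.
Proof.
case=> psi [Ipsi Hrs] Hst; exists psi; split => //.
have -> : psi *m r - t = (psi *m r - s) - (t - s) by rewrite opprB addrA subrK.
exact: intmxB.
Qed.

Lemma disc_rel_dual r s : dual_vec G r -> disc_rel G r s -> dual_vec G s.
Proof.
move=> Hr [psi [Ipsi Hrs]].
rewrite /dual_vec -[s](subKr (psi *m r)) mulmxBr.
exact: intmxB (lattice_isometry_dual Ipsi Hr) (lattice_dual Hrs).
Qed.

Lemma disc_rel_lattice r s : disc_rel G r s -> intmx s -> intmx r.
Proof.
move=> /disc_rel_sym [phi [[Iphi _] Hsr]] Hs.
by rewrite -[r](subKr (phi *m s)); apply: intmxB Hsr; apply: intmxM.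
Qed.

Lemma bform_sym u v : bform G u v = bform G v u.
Proof.
rewrite /bform; transitivity ((u^T *m G *m v)^T 0 0); first by rewrite [RHS]mxE.
by rewrite !trmx_mul trmxK G_sym mulmxA.
Qed.

Lemma bform_dual_int u w : dual_vec G u -> intmx w -> bform G u w \is a Num.int.
Proof.
move=> Hu Hw; rewrite bform_sym /bform -mulmxA.
exact: (intmxM (intmx_tr Hw) Hu 0 0).
Qed.

Lemma bform_subr u w : bform G (u - w) (u - w) = bform G u u - 2 * bform G u w + bform G w w.
Proof.
rewrite /bform.
have -> : (u - w)^T = u^T - w^T by apply/matrixP => i j; rewrite !mxE.
have entryB (A B : 'M[rat]_1) : (A - B) 0 0 = A 0 0 - B 0 0 by rewrite !mxE.
rewrite !mulmxBl !mulmxBr !entryB.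
rewrite -/(bform G u w) -/(bform G w u) (bform_sym w u) -/(bform G u u) -/(bform G w w).
by ring.
Qed.

Lemma bform_isometry psi u v :
  lattice_isometry G psi -> bform G (psi *m u) (psi *m v) = bform G u v.
Proof.
case=> _ E; rewrite /bform -{2}E.
by rewrite trmx_mul !mulmxA.
Qed.

(* Split [G] as [2 D + U + U^T] with [D] diagonal and [U] strictly upper triangular. *)
Lemma bform_even w : intmx w -> bform G w w / 2 \is a Num.int.
Proof.
move=> Hw.
pose U := \matrix_(i, j) if (i < j)%N then G i j else 0.
pose D := diag_mx (\row_i (G i i / 2)).
have GE : G = 2%:R *: D + U + U^T.
  apply/matrixP => i j; rewrite !mxE.
  case: (ltngtP i j) => [lt_ij | lt_ji | eq_ij].
  - by rewrite -val_eqE (ltn_eqF lt_ij) mulr0n mulr0 add0r addr0.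
  - by rewrite -val_eqE (gtn_eqF lt_ji) mulr0n mulr0 !add0r -{1}G_sym mxE.
  - have -> : j = i by apply/val_inj.
    by rewrite eqxx mulr1n !addr0 mulrC divfK ?pnatr_eq0.
have UU : (w^T *m U^T *m w) 0 0 = (w^T *m U *m w) 0 0.
  transitivity ((w^T *m U^T *m w)^T 0 0); first by rewrite [RHS]mxE.
  by rewrite !trmx_mul !trmxK mulmxA.
have -> : bform G w w / 2 = (w^T *m D *m w) 0 0 + (w^T *m U *m w) 0 0.
  rewrite /bform GE !mulmxDr !mulmxDl ![(_ + _ : 'M[rat]_1) 0 0]mxE UU.
  by rewrite -scalemxAr -scalemxAl [(_ *: _ : 'M[rat]_1) 0 0]mxE; field.
have intD : intmx D by move=> i j; rewrite !mxE rpredMn.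
have intU : intmx U by move=> i j; rewrite !mxE; case: ifP.
by apply: rpredD; apply: (intmxM _ Hw 0 0); apply: intmxM (intmx_tr Hw) _.
Qed.

Lemma disc_q_diff v c1 c2 : disc_q G v c1 -> disc_q G v c2 -> (c1 - c2) / 2 \is a Num.int.
Proof.
move=> H1 H2; have -> : (c1 - c2) / 2 = (bform G v v - c2) / 2 - (bform G v v - c1) / 2 by field.
exact: rpredB.
Qed.

Lemma disc_rel_q r s c : dual_vec G r -> disc_rel G r s -> disc_q G r c -> disc_q G s c.
Proof.
move=> Hr [psi [Ipsi Hrs]] Hq; set w := psi *m r - s.
have -> : s = psi *m r - w by rewrite opprB addrC subrK.
rewrite /disc_q bform_subr bform_isometry //.
have -> : (bform G r r - 2 * bform G (psi *m r) w + bform G w w - c) / 2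
    = (bform G r r - c) / 2 - bform G (psi *m r) w + bform G w w / 2 by field.
rewrite rpredD ?rpredB ?bform_even ?bform_dual_int //.
exact: lattice_isometry_dual.
Qed.

Lemma disc_rel_twice r s : disc_rel G r s -> disc_twice G r -> disc_twice G s.
Proof.
case=> psi [Ipsi Hrs] [u Hu Hru]; exists (psi *m u); first exact: lattice_isometry_dual.
have -> : s - 2%:R *: (psi *m u) = psi *m (r - 2%:R *: u) - (psi *m r - s).
  by rewrite mulmxBr -scalemxAr opprB [RHS]addrC addrA subrK.
by apply: intmxB Hrs; apply: intmxM Hru; case: Ipsi.
Qed.

Lemma disc_rel_norm r s c : disc_rel G r s -> coset_has_norm G r c -> coset_has_norm G s c.
Proof.
case=> psi [Ipsi Hrs] [y Hyr Hy]; exists (psi *m y); last by rewrite bform_isometry.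
have -> : psi *m y - s = psi *m (y - r) + (psi *m r - s) by rewrite mulmxBr addrA subrK.
by apply: intmxD Hrs; apply: intmxM Hyr; case: Ipsi.
Qed.

Lemma sqr_le_of_ldl (f : 'cV[rat]_n) (L : 'M[rat]_n) (d : 'rV[rat]_n) :
    (forall k, 0 <= d 0 k) -> - G = f *m f^T + L^T *m diag_mx d *m L ->
  forall y, (f^T *m y) 0 0 ^+ 2 <= - bform G y y.
Proof.
move=> d_ge0 GE y.
have -> : - bform G y y = (y^T *m (- G) *m y) 0 0 by rewrite mulmxN mulNmx mxE.
rewrite GE mulmxDr mulmxDl [(_ + _ : 'M[rat]_1) 0 0]mxE.
have -> : y^T *m (f *m f^T) *m y = (f^T *m y)^T *m (f^T *m y).
  by rewrite trmx_mul trmxK !mulmxA.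
have -> : y^T *m (L^T *m diag_mx d *m L) *m y = (L *m y)^T *m diag_mx d *m (L *m y).
  by rewrite trmx_mul !mulmxA.
rewrite [X in X + _]mxE big_ord1 [_^T 0 _]mxE -expr2 lerDl mul_mx_diag mxE.
apply: sumr_ge0 => k _; rewrite !mxE mulrAC -expr2.
by rewrite mulr_ge0 ?sqr_ge0.
Qed.

Lemma dual_vec_covered (Gi : 'M[rat]_n) (e : nat) (P : 'cV[rat]_n -> Prop) :
    Gi *m G = 1%:M -> (forall j, intmx (e.+1%:R *: col j Gi)) ->
    (forall v w, intmx (w - v) -> P v -> P w) ->
    P 0 -> (forall j v, P v -> P (v + col j Gi)) ->
  forall v, dual_vec G v -> P v.
Proof.
move=> GiG col_order P_congr P0 P_step.
have P_nat j m v : P v -> P (v + m%:R *: col j Gi).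
  elim: m => [|m IH] Pv; first by rewrite scale0r addr0.
  by rewrite mulrSr scalerDl scale1r addrA; apply/P_step/IH.
(* [- col j Gi] is congruent to [e *: col j Gi] modulo the lattice. *)
have P_int j c v : c \is a Num.int -> P v -> P (v + c *: col j Gi).
  move=> /intrP [[m|m] ->] Pv; first exact: P_nat.
  apply: (P_congr (v + (m.+1 * e)%:R *: col j Gi)); last exact: P_nat.
  have -> : v + (Negz m)%:~R *: col j Gi - (v + (m.+1 * e)%:R *: col j Gi)
      = - (m.+1%:R *: (e.+1%:R *: col j Gi)).
    apply/matrixP => a b; rewrite !mxE NegzE mulrNz natrM !mulrS; ring.
  by apply/intmxN/intmxZ; rewrite ?rpred_nat.
move=> v Hv.
have -> : v = \sum_j (G *m v) j 0 *: col j Gi.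
  rewrite -[v in LHS]mul1mx -GiG -mulmxA.
  apply/matrixP => a b; rewrite !mxE summxE (ord1 b).
  by apply: eq_bigr => j _; rewrite !mxE mulrC.
elim/big_rec: _ => [|j u _ Pu]; first exact: P0.
by rewrite addrC; apply: P_int.
Qed.

End Lattice.

Lemma half_int_sqr_le1 (R : archiRealFieldType) (s : R) :
  s - 1/2 \is a Num.int -> s ^+ 2 <= 1 -> (s == 1/2) || (s == - (1/2)).
Proof.
move=> /intrP [z Ez]; have -> : s = z%:~R + 1/2 by rewrite -Ez subrK.
move=> s2_le1; have : (z = 0) \/ (z = -1).
  have : (z < 1)%R by rewrite -(ltrz1 R); nra.
  have : (- z < 2)%R by rewrite -(ltr_int R) intrN; nra.
  lia.
by case=> ->; rewrite ?intrN; apply/orP; [left | right]; apply/eqP; field.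
Qed.

Fixpoint signs (k : nat) : seq (seq rat) :=
  if k is k'.+1 then [seq a :: t | a <- [:: 1/2; - (1/2)], t <- signs k'] else [:: [::]].

Lemma mem_signs (t : seq rat) :
  all (fun a => (a == 1/2) || (a == - (1/2))) t -> t \in signs (size t).
Proof.
elim: t => [|a t IH]; first by rewrite inE.
case/andP => a_sign /IH t_signs; apply/allpairsP; exists (a, t).
by split=> //; rewrite !inE.
Qed.

(** * Matrices as lists, for evaluation *)

Section ListMatrices.
Variable n : nat.

Definition colv (s : seq rat) : 'cV[rat]_n := \col_i s`_i.
Definition sqmx (A : seq (seq rat)) : 'M[rat]_n := \matrix_(i, j) (nth [::] A i)`_j.

Definition vec_l (F : nat -> rat) : seq rat := mkseq F n.
Definition mat_l (F : nat -> nat -> rat) : seq (seq rat) := mkseq (fun i => mkseq (F i) n) n.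

Lemma colvE s i j : colv s i j = s`_i.
Proof. by rewrite mxE. Qed.

Lemma colv_vec_l F : colv (vec_l F) = \col_i F i.
Proof. by apply/matrixP => i j; rewrite !mxE nth_mkseq. Qed.

Lemma sqmx_mat_l F : sqmx (mat_l F) = \matrix_(i, j) F i j.
Proof. by apply/matrixP => i j; rewrite !mxE nth_mkseq // nth_mkseq. Qed.

Definition sum_l (F : nat -> rat) : rat := foldr (fun k acc => F k + acc) 0 (iota 0 n).

Lemma sum_lE F : sum_l F = \sum_(k < n) F k.
Proof.
rewrite /sum_l -(big_mkord xpredT) /index_iota subn0.
by elim: (iota 0 n) => [|k s IH] /=; rewrite ?big_nil ?big_cons ?IH.
Qed.

Definition dot_l (u v : seq rat) : rat := sum_l (fun k => u`_k * v`_k).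
Definition mulmv_l (A : seq (seq rat)) (v : seq rat) : seq rat :=
  vec_l (fun i => dot_l (nth [::] A i) v).
Definition mulmm_l (A B : seq (seq rat)) : seq (seq rat) :=
  mat_l (fun i j => sum_l (fun k => (nth [::] A i)`_k * (nth [::] B k)`_j)).
Definition tr_l (A : seq (seq rat)) : seq (seq rat) := mat_l (fun i j => (nth [::] A j)`_i).
Definition addm_l (A B : seq (seq rat)) : seq (seq rat) :=
  mat_l (fun i j => (nth [::] A i)`_j + (nth [::] B i)`_j).
Definition oppm_l (A : seq (seq rat)) : seq (seq rat) := mat_l (fun i j => - (nth [::] A i)`_j).
Definition id_l : seq (seq rat) := mat_l (fun i j => (i == j)%:R).
Definition outer_l (f : seq rat) : seq (seq rat) := mat_l (fun i j => f`_i * f`_j).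
Definition diag_l (d : seq rat) : seq (seq rat) := mat_l (fun i j => (i == j)%:R * d`_i).
Definition add_l (u v : seq rat) : seq rat := vec_l (fun i => u`_i + v`_i).
Definition sub_l (u v : seq rat) : seq rat := vec_l (fun i => u`_i - v`_i).
Definition scale_l (c : rat) (u : seq rat) : seq rat := vec_l (fun i => c * u`_i).
Definition col_l (A : seq (seq rat)) (j : nat) : seq rat := vec_l (fun i => (nth [::] A i)`_j).

Lemma colvD u v : colv (add_l u v) = colv u + colv v.
Proof. by rewrite colv_vec_l; apply/matrixP => i j; rewrite !mxE. Qed.

Lemma colvB u v : colv (sub_l u v) = colv u - colv v.
Proof. by rewrite colv_vec_l; apply/matrixP => i j; rewrite !mxE. Qed.

Lemma colvZ c u : colv (scale_l c u) = c *: colv u.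
Proof. by rewrite colv_vec_l; apply/matrixP => i j; rewrite !mxE. Qed.

Lemma colv_col_l A (j : 'I_n) : colv (col_l A j) = col j (sqmx A).
Proof. by rewrite colv_vec_l; apply/matrixP => i k; rewrite !mxE. Qed.

Lemma colv_mulmv A v : colv (mulmv_l A v) = sqmx A *m colv v.
Proof.
rewrite colv_vec_l; apply/matrixP => i j; rewrite !mxE /dot_l sum_lE.
by apply: eq_bigr => k _; rewrite !mxE.
Qed.

Lemma sqmxM A B : sqmx (mulmm_l A B) = sqmx A *m sqmx B.
Proof.
rewrite sqmx_mat_l; apply/matrixP => i j; rewrite !mxE sum_lE.
by apply: eq_bigr => k _; rewrite !mxE.
Qed.

Lemma sqmx_tr A : sqmx (tr_l A) = (sqmx A)^T.
Proof. by rewrite sqmx_mat_l; apply/matrixP => i j; rewrite !mxE. Qed.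

Lemma sqmxD A B : sqmx (addm_l A B) = sqmx A + sqmx B.
Proof. by rewrite sqmx_mat_l; apply/matrixP => i j; rewrite !mxE. Qed.

Lemma sqmxN A : sqmx (oppm_l A) = - sqmx A.
Proof. by rewrite sqmx_mat_l; apply/matrixP => i j; rewrite !mxE. Qed.

Lemma sqmx_id : sqmx id_l = 1%:M.
Proof. by rewrite sqmx_mat_l; apply/matrixP => i j; rewrite !mxE. Qed.

Lemma sqmx_outer f : sqmx (outer_l f) = colv f *m (colv f)^T.
Proof. by rewrite sqmx_mat_l; apply/matrixP => i j; rewrite !mxE big_ord1 !mxE. Qed.

Lemma sqmx_diag d : sqmx (diag_l d) = diag_mx (colv d)^T.
Proof. by rewrite sqmx_mat_l; apply/matrixP => i j; rewrite !mxE mulrC mulr_natr. Qed.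

Lemma bform_l A u v : bform (sqmx A) (colv u) (colv v) = dot_l u (mulmv_l A v).
Proof.
rewrite /bform -mulmxA -colv_mulmv mxE /dot_l sum_lE.
by apply: eq_bigr => k _; rewrite !mxE.
Qed.

Definition int_l (u : seq rat) : bool := all (fun i => u`_i \is a Num.int) (iota 0 n).
Definition intmat_l (A : seq (seq rat)) : bool := all (fun i => int_l (nth [::] A i)) (iota 0 n).

Lemma mem_iota_ord (i : 'I_n) : val i \in iota 0 n.
Proof. by rewrite mem_iota leq0n add0n ltn_ord. Qed.

Lemma all_iota_ord (P : pred nat) (i : 'I_n) : all P (iota 0 n) -> P i.
Proof. by move/allP; apply; apply: mem_iota_ord. Qed.

Lemma int_lP u : reflect (intmx (colv u)) (int_l u).
Proof.
apply: (iffP allP) => [Hu i j | Hu i]; first by rewrite mxE; apply/Hu/mem_iota_ord.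
by rewrite mem_iota => /= lt_in; have := Hu (Ordinal lt_in) 0; rewrite mxE.
Qed.

Lemma intmat_lP A : intmat_l A -> intmx (sqmx A).
Proof.
move=> /allP HA i j; have /int_lP := HA _ (mem_iota_ord i).
by move/(_ j 0); rewrite !mxE.
Qed.

Definition fracq (x : rat) : rat := x - (Num.floor x)%:~R.
Definition reduce_l (u : seq rat) : seq rat := vec_l (fun i => fracq u`_i).

Lemma reduce_l_congr u : intmx (colv u - colv (reduce_l u)).
Proof. by rewrite colv_vec_l => i j; rewrite !mxE /fracq opprB addrC subrK intr_int. Qed.

Definition reduced_l (u : seq rat) : bool := (size u == n) && all (fun x => 0 <= x < 1) u.

Lemma reduced_l_inj u v : reduced_l u -> reduced_l v -> intmx (colv u - colv v) -> u = v.
Proof.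
move=> /andP [/eqP size_u /allP u01] /andP [/eqP size_v /allP v01] Huv.
apply: (@eq_from_nth _ 0) => [|k]; first by rewrite size_u size_v.
rewrite size_u => lt_kn.
have /andP [u0 u1] : 0 <= u`_k < 1 by apply/u01/mem_nth; rewrite size_u.
have /andP [v0 v1] : 0 <= v`_k < 1 by apply/v01/mem_nth; rewrite size_v.
have := Huv (Ordinal lt_kn) 0; rewrite !mxE /= => /intrP [z Ez].
have z_lt1 : (z < 1)%R by rewrite -(ltrz1 rat) -Ez; lra.
have Nz_lt1 : (- z < 1)%R by rewrite -(ltrz1 rat) intrN -Ez; lra.
by apply/eqP; rewrite -subr_eq0 Ez (_ : z = 0) //; lia.
Qed.

End ListMatrices.

Section BreadthFirstSearch.
Variables (T : eqType) (next : T -> seq T).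

Fixpoint bfs (fuel : nat) (seen frontier : seq T) : seq T :=
  if fuel is fuel'.+1 then
    let fresh := undup [seq y <- flatten (map next frontier) | y \notin seen] in
    if fresh is [::] then seen else bfs fuel' (seen ++ fresh) fresh
  else seen.

Lemma bfs_closed (P : T -> Prop) : (forall x y, P x -> y \in next x -> P y) ->
  forall fuel seen frontier, {in seen, forall x, P x} -> {in frontier, forall x, P x} ->
  {in bfs fuel seen frontier, forall x, P x}.
Proof.
move=> P_next; elim=> [|fuel IH] seen frontier Pseen Pfr //=.
set fresh := undup _.
have Pfresh : {in fresh, forall x, P x}.
  move=> y; rewrite mem_undup mem_filter => /andP [_ /flattenP [ys]].
  by move=> /mapP [x x_fr ->] y_next; apply: P_next (Pfr x x_fr) y_next.
case: fresh Pfresh => [|y ys] Pfresh //; apply: IH => // x.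
by rewrite mem_cat => /orP [/Pseen | /Pfresh].
Qed.

End BreadthFirstSearch.

(** * The lattice Omega_{2,2} *)

Local Notation G := Omega22_gram.
Local Notation cv := (colv 12).
Local Notation mx := (sqmx 12).

Definition gram_l : seq (seq rat) := mat_l 12 (fun i j => ((nth [::] Omega22_rows i)`_j)%:~R).

Lemma Omega22_gramE : G = mx gram_l.
Proof. by rewrite sqmx_mat_l. Qed.

Lemma Omega22_gram_sym : G^T = G.
Proof. by rewrite Omega22_gramE -sqmx_tr; congr (sqmx 12); apply/eqP; vm_compute. Qed.

Lemma Omega22_gram_int : intmx G.
Proof. by rewrite Omega22_gramE; apply: intmat_lP; vm_compute. Qed.

Lemma Omega22_gram_even i : G i i / 2 \is a Num.int.
Proof.
rewrite Omega22_gramE mxE.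
by apply: (all_iota_ord (P := fun k => (nth [::] gram_l k)`_k / 2 \is a Num.int)); vm_compute.
Qed.

Definition gram_inv_l : seq (seq rat) :=
  [:: [:: (-9/2); (-3/4); 1; (5/2); (-9/4); 0; (11/4); (-9/4); (-7/4); (-3/2); (-3/2); (3/2)];
    [:: (-3/4); (-3/2); (-1/4); 1; (-5/4); (-1/2); (3/4); (-5/4); (-1/2); (-1/2); (-1/2); (1/2)];
    [:: 1; (-1/4); (-3/2); (-1/2); (3/4); (-1/2); (-3/4); (1/4); (-1/4); (1/2); (1/2); (-1/2)];
    [:: (5/2); 1; (-1/2); (-2); (3/2); 0; (-3/2); (3/2); 1; 1; 1; (-1)];
    [:: (-9/4); (-5/4); (3/4); (3/2); (-5/2); (-1/2); 2; (-2); (-3/4); (-1); (-1); 1];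
    [:: 0; (-1/2); (-1/2); 0; (-1/2); (-1); (1/2); (-1/2); (-1/2); 0; 0; 0];
    [:: (11/4); (3/4); (-3/4); (-3/2); 2; (1/2); (-5/2); 2; (5/4); 1; 1; (-1)];
    [:: (-9/4); (-5/4); (1/4); (3/2); (-2); (-1/2); 2; (-5/2); (-5/4); (-1); (-1); 1];
    [:: (-7/4); (-1/2); (-1/4); 1; (-3/4); (-1/2); (5/4); (-5/4); (-3/2); (-1/2); (-1/2); (1/2)];
    [:: (-3/2); (-1/2); (1/2); 1; (-1); 0; 1; (-1); (-1/2); (-1); (-1/2); (1/2)];
    [:: (-3/2); (-1/2); (1/2); 1; (-1); 0; 1; (-1); (-1/2); (-1/2); (-1); (1/2)];
    [:: (3/2); (1/2); (-1/2); (-1); 1; 0; (-1); 1; (1/2); (1/2); (1/2); (-1)]].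

Lemma Omega22_gram_inv : mx gram_inv_l *m G = 1%:M.
Proof. by rewrite Omega22_gramE -sqmxM -sqmx_id; congr (sqmx 12); apply/eqP; vm_compute. Qed.

Lemma Omega22_gram_det : \det G != 0.
Proof.
apply/eqP => detG0; have := congr1 determinant Omega22_gram_inv.
by rewrite det_mulmx detG0 mulr0 det1 => /eqP; rewrite eq_sym oner_eq0.
Qed.

Definition isometry1_l : seq (seq rat) :=
  [:: [:: 0; 0; 0; 1; 0; 0; (-1); 0; 0; (-1); 2; 1];
    [:: 0; 0; 1; 1; 0; 0; 0; (-1); 0; 1; 2; (-1)];
    [:: 0; (-1); 1; 0; 1; 0; 0; (-1); 0; 1; 0; (-1)];
    [:: 0; 0; 0; (-1); 0; 0; 0; 0; 0; 0; (-2); 0];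
    [:: 0; 0; 1; 1; 0; 0; 0; 0; 0; 0; 2; 0];
    [:: (-1); (-1); 1; 0; 1; 0; 0; (-1); 1; 1; 1; (-1)];
    [:: 1; 0; (-1); (-1); (-1); 1; 1; 1; (-1); 0; (-2); 0];
    [:: 0; 0; 1; 1; 1; 0; 0; (-1); 0; 0; 2; 0];
    [:: 0; 0; 0; 1; 1; 0; 0; (-1); 1; 0; 1; 0];
    [:: 0; 0; 0; 1; 0; 0; 0; 0; 0; 0; 1; 0];
    [:: 0; 0; 0; 0; 0; 0; 0; 0; 0; (-1); 1; 0];
    [:: 0; 0; 0; 0; 0; 0; 0; 0; 0; 0; (-1); (-1)]].

Definition isometry2_l : seq (seq rat) :=
  [:: [:: 1; 3; (-1); 2; 0; (-1); 1; (-1); 2; 0; 0; 0];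
    [:: 0; 0; 1; 1; 1; (-1); 0; (-1); 1; 1; 0; 0];
    [:: 0; (-1); 0; (-1); 0; 1; 0; 0; 0; 0; 0; 1];
    [:: (-1); (-2); 0; (-2); 0; 1; 0; 1; (-1); 0; 0; 0];
    [:: 0; 1; 1; 1; 1; (-2); 0; (-1); 1; 1; 0; 0];
    [:: 0; 0; 0; 0; 0; 0; 0; 0; 0; 1; 0; 1];
    [:: (-1); (-2); 1; (-1); 0; 1; (-1); 0; (-1); 0; 1; (-1)];
    [:: 1; 1; 0; 1; 1; (-1); 1; 0; 1; 0; (-1); 1];
    [:: 1; 1; (-1); 1; 0; 0; 1; 0; 1; 0; 0; 1];
    [:: 1; 1; 0; 1; 0; 0; 1; 0; 0; 0; 0; 0];
    [:: 0; 1; 0; 1; 1; (-1); 0; (-1); 1; 0; 0; 0];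
    [:: 0; (-1); 0; (-1); 0; 1; 0; 0; (-1); 0; 0; 0]].

Definition isometry_gens_l : seq (seq (seq rat)) := [:: isometry1_l; isometry2_l].

Lemma isometry_gens g : g \in isometry_gens_l -> isometry_Omega (mx g).
Proof.
rewrite !inE => /orP [] /eqP ->; split; try (apply: intmat_lP; by vm_compute);
  by rewrite Omega22_gramE -sqmx_tr -!sqmxM; congr (sqmx 12); apply/eqP; vm_compute.
Qed.

Definition act_l (g : seq (seq rat)) (u : seq rat) : seq rat := reduce_l 12 (mulmv_l 12 g u).

Definition orbit_l (u : seq rat) : seq (seq rat) :=
  bfs (fun x => [seq act_l g x | g <- isometry_gens_l]) 100 [:: u] [:: u].

Lemma orbit_l_equiv u : {in orbit_l u, forall x, disc_equiv (cv u) (cv x)}.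
Proof.
have from_u : {in [:: u], forall x, disc_equiv (cv u) (cv x)}.
  by move=> x; rewrite inE => /eqP ->; apply: disc_rel_refl.
apply: (bfs_closed _ from_u from_u) => x y Ex /mapP [g gen_g ->].
apply: (disc_rel_trans Ex); exists (mx g); split; first exact: isometry_gens.
by rewrite -colv_mulmv; apply: reduce_l_congr.
Qed.

Definition rep_l : seq (seq rat) :=
  [:: [:: 0; 0; 0; 0; 0; 0; (1/2); (1/2); (1/2); 0; (1/2); (1/2)];
    [:: 0; (1/2); 0; 0; (1/2); 0; (1/2); (1/2); (1/2); 0; 0; 0];
    [:: 0; 0; 0; 0; 0; (1/2); (1/2); (1/2); 0; 0; (1/2); (1/2)];
    [:: 0; 0; 0; 0; 0; 0; 0; 0; 0; 0; (1/2); (1/2)];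
    [:: 0; (1/4); 0; (1/2); (1/4); 0; (1/4); (1/4); (1/4); 0; 0; (1/2)];
    [:: 0; (1/4); 0; (1/2); (1/4); 0; (1/4); (1/4); (1/4); (1/2); (1/2); (1/2)]].

Definition rep (i : nat) : 'cV[rat]_12 := cv (nth [::] rep_l i).

Definition class_table : seq (nat * rat * nat) :=
  [:: (2%N, 0, 108%N); (2%N, 0, 3%N); (2%N, 1, 108%N);
      (2%N, 1, 36%N); (4%N, 1/2, 384%N); (4%N, 3/2, 384%N)].

Definition orbits_l : seq (seq (seq rat)) := map orbit_l rep_l.

(* Coordinates of reduced vectors lie in [{0, 1/4, 1/2, 3/4}], so [4 x] is a
   base-4 digit; keys only speed up lookups, which [closure_check] re-verifies. *)
Definition key (u : seq rat) : BinNums.N :=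
  foldr (fun x acc => BinNat.N.add (BinNat.N.mul (BinNat.N.of_nat 4) acc)
                                   (BinNat.N.of_nat `|numq (4 * x)|))
        BinNat.N.zero u.

Definition lookup (L : seq (seq rat)) (keys : seq BinNums.N) (u : seq rat) : seq rat :=
  nth [::] L (find (BinNat.N.eqb (key u)) keys).

Lemma lookup_mem L keys u : u != [::] -> lookup L keys u == u -> u \in L.
Proof.
rewrite /lookup; set k := find _ _ => u_nil /eqP Eu.
case: (ltnP k (size L)) => [lt_kL | /(nth_default [::]) E]; first by rewrite -Eu mem_nth.
by rewrite E in Eu; rewrite -Eu eqxx in u_nil.
Qed.

Definition closure_check (L : seq (seq rat)) : bool :=
  let keys := map key L in
  let cols := map (col_l 12 gram_inv_l) (iota 0 12) in
  all (fun l => all (fun c => let t := reduce_l 12 (add_l 12 l c) in lookup L keys t == t) cols) L.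

Definition classes_l : seq (seq rat) := nseq 12 0 :: flatten orbits_l.

Definition orbits_check (os : seq (seq (seq rat))) : bool :=
  let L := nseq 12 0 :: flatten os in
  [&& map size os == map snd class_table,
      all (fun o => uniq (map key o)) os,
      all (all (reduced_l 12)) os,
      closure_check L &
      all (fun l => ~~ int_l 12 (sub_l 12 (nth [::] rep_l 0) (scale_l 12 2 l))) L].

Lemma orbits_ok : orbits_check orbits_l.
Proof. by vm_compute. Qed.

Lemma size_orbits_l : map size orbits_l = map snd class_table.
Proof. by have /and5P [/eqP E _ _ _ _] := orbits_ok; exact: E. Qed.

Lemma orbits_l_uniq : all (fun o => uniq (map key o)) orbits_l.
Proof. by have /and5P [_ E _ _ _] := orbits_ok; exact: E. Qed.

Lemma orbits_l_reduced : all (all (reduced_l 12)) orbits_l.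
Proof. by have /and5P [_ _ E _ _] := orbits_ok; exact: E. Qed.

Lemma classes_l_closed : closure_check classes_l.
Proof. by have /and5P [_ _ _ E _] := orbits_ok; exact: E. Qed.

Lemma classes_l_not_twice_rep0 :
  all (fun l => ~~ int_l 12 (sub_l 12 (nth [::] rep_l 0) (scale_l 12 2 l))) classes_l.
Proof. by have /and5P [_ _ _ _ E] := orbits_ok; exact: E. Qed.

Lemma colv0 : cv (nseq 12 0) = 0.
Proof. by apply/matrixP => i j; rewrite !mxE nth_nseq if_same. Qed.

Lemma dual_congr_classes v : in_dual v -> exists2 l, l \in classes_l & in_Omega (v - cv l).
Proof.
pose P w := exists2 l, l \in classes_l & in_Omega (w - cv l).
apply: (dual_vec_covered (e := 3) (P := P) Omega22_gram_inv)
  => [j | w x Hwx [l Hl Hwl] | | j w [l Hl Hwl]].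
- rewrite -colv_col_l -colvZ; apply/int_lP.
  apply: (@all_iota_ord 12 (fun j => int_l 12 (scale_l 12 4 (col_l 12 gram_inv_l j)))).
  by vm_compute.
- exists l => //; have -> : x - cv l = (x - w) + (w - cv l) by rewrite addrA subrK.
  exact: intmxD.
- by exists (nseq 12 0); rewrite ?mem_head // colv0 subrr; apply: intmx0.
- set c := col_l 12 gram_inv_l j; set t := reduce_l 12 (add_l 12 l c).
  have Ht : lookup classes_l (map key classes_l) t == t.
    move: classes_l_closed; rewrite /closure_check => /allP/(_ l Hl)/allP; apply.
    exact/map_f/mem_iota_ord.
  exists t; first by apply: lookup_mem Ht; rewrite -size_eq0 size_mkseq.
  have -> : w + col j (mx gram_inv_l) - cv t = (w - cv l) + (cv (add_l 12 l c) - cv t).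
    by rewrite colvD colv_col_l !addrA subrK.
  apply: intmxD Hwl _; rewrite /t; exact: reduce_l_congr.
Qed.

Definition order_l (k : nat) (u : seq rat) : bool :=
  int_l 12 (scale_l 12 k%:R u) && all (fun m => ~~ int_l 12 (scale_l 12 m%:R u)) (iota 1 k.-1).

Lemma order_lP k u : (0 < k)%N -> order_l k u -> disc_order_is (cv u) k.
Proof.
move=> k_gt0 /andP [/int_lP Hk /allP Hm]; split=> //; split; first by rewrite -colvZ.
move=> m m_gt0 lt_mk; rewrite -colvZ => /int_lP; apply/negP/Hm.
by rewrite mem_iota m_gt0 add1n prednK.
Qed.

Definition reps_check : bool :=
  all (fun i =>
    let r := nth [::] rep_l i in let d := nth (0%N, 0, 0%N) class_table i in
    [&& int_l 12 (mulmv_l 12 gram_l r), ~~ int_l 12 r, (0 < d.1.1)%N, order_l d.1.1 r &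
        (dot_l 12 r (mulmv_l 12 gram_l r) - d.1.2) / 2 \is a Num.int]) (iota 0 6).

Lemma reps_ok : reps_check.
Proof. by vm_compute. Qed.

Section Representatives.
Variable i : nat.
Hypothesis lt_i6 : (i < 6)%N.
Let d := nth (0%N, 0, 0%N) class_table i.

Let rep_facts := allP reps_ok i (etrans (mem_iota 0 6 i) lt_i6).

Lemma rep_dual : in_dual (rep i).
Proof. by have /and5P [/int_lP + _ _ _ _] := rep_facts; rewrite colv_mulmv -Omega22_gramE. Qed.

Lemma rep_not_lattice : ~ in_Omega (rep i).
Proof. by have /and5P [_ /negP + _ _ _] := rep_facts; move/[swap]/int_lP. Qed.

Lemma rep_order : disc_order_is (rep i) d.1.1.
Proof. by have /and5P [_ _ + + _] := rep_facts; exact: order_lP. Qed.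

Lemma rep_q : disc_q_is (rep i) d.1.2.
Proof.
have /and5P [_ _ _ _] := rep_facts.
by rewrite /disc_q_is /sqnorm -/(bform G _ _) Omega22_gramE bform_l.
Qed.

End Representatives.

Definition half_rep1_l : seq rat :=
  [:: 0; (1/4); 0; (1/2); (1/4); 0; (1/4); (1/4); (1/4); 0; 0; (1/2)].

Lemma rep1_twice : disc_twice G (rep 1).
Proof.
exists (cv half_rep1_l).
  by rewrite /dual_vec Omega22_gramE -colv_mulmv; apply/int_lP; vm_compute.
by rewrite /rep -colvZ -colvB; apply/int_lP; vm_compute.
Qed.

Lemma rep0_not_twice : ~ disc_twice G (rep 0).
Proof.
case=> u Hu Hru; have [l Hl Hul] := dual_congr_classes Hu.
move/allP/(_ l Hl)/negP: classes_l_not_twice_rep0; apply; apply/int_lP.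
rewrite colvB colvZ -/(rep 0).
have -> : rep 0 - 2 *: cv l = (rep 0 - 2%:R *: u) + 2%:R *: (u - cv l).
  by rewrite scalerBr addrA subrK.
by apply: intmxD Hru (intmxZ _ Hul); rewrite rpred_nat.
Qed.

Definition norm_rep3_l : seq rat := [:: 0; 0; 0; 0; 0; 0; 0; 0; 0; 0; (-1/2); (-1/2)].

Lemma rep3_norm : coset_has_norm G (rep 3) (-1).
Proof.
exists (cv norm_rep3_l); first by rewrite /rep -colvB; apply/int_lP; vm_compute.
by rewrite Omega22_gramE bform_l; apply/eqP; vm_compute.
Qed.

Definition cert_F_l : seq (seq rat) :=
  [:: [:: 0; 0; 0; 0; 0; 0; 0; 0; 0; (-1); 0; (-1)];
    [:: 0; 0; 0; 0; 0; 0; 0; 0; 0; 0; 0; (-1)];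
    [:: 0; 0; 0; 1; 0; 0; 0; 0; 0; 0; 0; (-1)];
    [:: (-1); 0; 1; 0; 0; (-1); (-1); (-1); 0; 1; 1; (-1)];
    [:: (-1); (-1); 2; 0; 1; (-1); (-1); (-1); 0; 1; 1; (-1)];
    [:: (-1); 0; 0; 0; 0; 0; 0; (-1); 1; 1; 1; (-1)];
    [:: 0; 0; 0; (-1); 0; 0; 0; 0; 0; (-1); (-1); 0];
    [:: 0; 1; 0; 0; (-1); 0; (-1); 0; (-1); 0; 0; 0];
    [:: 1; 0; 0; 0; (-1); 1; 0; 0; (-1); 0; 0; 0];
    [:: 0; (-1); 0; (-1); 0; 1; 0; 0; (-1); 0; 0; 0];
    [:: 1; 0; 0; 0; (-1); 1; 1; 1; (-1); 0; 0; 0];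
    [:: 1; 1; 0; 1; 0; 0; 0; (-1); 0; 0; 0; 0]].

Definition cert_Finv_l : seq (seq rat) :=
  [:: [:: 0; (3/2); (-1); 0; 0; (-1/2); (-1/2); (-1/2); 1; (-1/2); (-1/2); 0];
    [:: 0; (1/2); (-1/2); (-1); (1/2); (1/2); 0; 1; (-1); 0; (1/2); (1/2)];
    [:: 0; (-1/2); 0; (-1); 1; (1/2); (1/2); (1/2); 0; (-1/2); (1/2); 0];
    [:: 0; (-1); 1; 0; 0; 0; 0; 0; 0; 0; 0; 0];
    [:: 0; 1; (-1/2); (-1); (1/2); 0; (-1/2); (1/2); (-1); (1/2); 0; (1/2)];
    [:: 0; 0; 0; (-2); 1; 1; 0; 1; 0; 0; 0; 0];
    [:: 0; (-1); (1/2); 1; (-1/2); 0; (1/2); (-1/2); (-1); (1/2); 1; (1/2)];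
    [:: 0; 1; (-1/2); (-1); (1/2); 0; (-1/2); (1/2); 0; (-1/2); 0; (-1/2)];
    [:: 0; (1/2); (-1/2); (-1); (1/2); (1/2); 0; 0; 1; (-1); (-1/2); (-1/2)];
    [:: (-1); 1; 0; 0; 0; 0; 0; 0; 0; 0; 0; 0];
    [:: 1; 0; (-1); 0; 0; 0; (-1); 0; 0; 0; 0; 0];
    [:: 0; (-1); 0; 0; 0; 0; 0; 0; 0; 0; 0; 0]].

Definition cert_L_l : seq (seq (seq rat)) :=
  [:: [:: [:: 1; (1/2); (-1/2); (1/4); (-1/2); (1/2); (1/2); (1/2); (-1/2); (-1/2); (-1/2); (1/2)];
    [:: 0; 1; (-1/3); (1/2); (-1/3); (-1/3); (-1/3); (-1/3); (1/3); 0; 0; 0];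
    [:: 0; 0; 1; (3/8); (1/4); (-1/2); (-1/2); (-1/2); (-1/4); (3/8); (3/8); (-3/8)];
    [:: 0; 0; 0; 1; (2/7); (-4/21); (4/21); (-4/21); (10/21); (3/7); (3/7); (-3/7)];
    [:: 0; 0; 0; 0; 1; (-3/8); (3/8); (-3/8); (1/2); (-1/4); (-1/4); (1/4)];
    [:: 0; 0; 0; 0; 0; 1; (5/19); (-5/19); (-4/19); (6/19); (6/19); (-6/19)];
    [:: 0; 0; 0; 0; 0; 0; 1; (5/14); (2/7); (1/4); (1/4); (-1/4)];
    [:: 0; 0; 0; 0; 0; 0; 0; 1; (-4/9); (-7/18); (-7/18); (7/18)];
    [:: 0; 0; 0; 0; 0; 0; 0; 0; 1; (-1/4); (-1/4); (1/4)];
    [:: 0; 0; 0; 0; 0; 0; 0; 0; 0; 1; (-1); (-1)];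
    [:: 0; 0; 0; 0; 0; 0; 0; 0; 0; 0; 1; 0];
    [:: 0; 0; 0; 0; 0; 0; 0; 0; 0; 0; 0; 0]];
  [:: [:: 1; (1/2); (-1/2); (1/4); (-1/2); (1/2); (1/2); (1/2); (-1/2); (-1/2); (-1/2); (1/2)];
    [:: 0; 1; (-1/3); (1/2); (-1/3); (-1/3); (-1/3); (-1/3); (1/3); 0; 0; 0];
    [:: 0; 0; 1; (3/8); (1/4); (-1/2); (-1/2); (-1/2); (-1/4); (3/8); (3/8); (-3/8)];
    [:: 0; 0; 0; 1; (2/7); (-4/21); (4/21); (-4/21); (10/21); (3/7); (3/7); (-3/7)];
    [:: 0; 0; 0; 0; 1; (-3/8); (3/8); (-3/8); (1/2); (-1/4); (-1/4); (1/4)];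
    [:: 0; 0; 0; 0; 0; 1; (5/19); (-5/19); (-4/19); (6/19); (6/19); (-6/19)];
    [:: 0; 0; 0; 0; 0; 0; 1; (5/14); (2/7); (1/4); (1/4); (-1/4)];
    [:: 0; 0; 0; 0; 0; 0; 0; 1; (-4/9); (-7/18); (-7/18); (7/18)];
    [:: 0; 0; 0; 0; 0; 0; 0; 0; 1; (-1/4); (-1/4); (1/4)];
    [:: 0; 0; 0; 0; 0; 0; 0; 0; 0; 1; (-1/3); (1/3)];
    [:: 0; 0; 0; 0; 0; 0; 0; 0; 0; 0; 1; (1/2)];
    [:: 0; 0; 0; 0; 0; 0; 0; 0; 0; 0; 0; 0]];
  [:: [:: 1; (1/2); (-1/2); (1/4); (-1/2); (1/2); (1/2); (1/2); (-1/2); (-1/2); (-1/2); (1/2)];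
    [:: 0; 1; (-1/3); (1/2); (-1/3); (-1/3); (-1/3); (-1/3); (1/3); 0; 0; 0];
    [:: 0; 0; 1; (3/8); (1/4); (-1/2); (-1/2); (-1/2); (-1/4); (3/8); (3/8); (-3/8)];
    [:: 0; 0; 0; 1; (6/13); (-4/13); (4/13); (-4/13); (10/13); (9/13); (9/13); (-1/13)];
    [:: 0; 0; 0; 0; 1; (-5/14); (5/14); (-5/14); (3/7); (-5/14); (-5/14); (1/7)];
    [:: 0; 0; 0; 0; 0; 1; (3/11); (-3/11); (-2/11); (4/11); (4/11); (-3/11)];
    [:: 0; 0; 0; 0; 0; 0; 1; (3/8); (1/4); (3/16); (3/16); (-5/16)];
    [:: 0; 0; 0; 0; 0; 0; 0; 1; (-2/5); (-3/10); (-3/10); (1/2)];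
    [:: 0; 0; 0; 0; 0; 0; 0; 0; 1; (-1/2); (-1/2); 0];
    [:: 0; 0; 0; 0; 0; 0; 0; 0; 0; 1; (-1); 0];
    [:: 0; 0; 0; 0; 0; 0; 0; 0; 0; 0; 0; 1];
    [:: 0; 0; 0; 0; 0; 0; 0; 0; 0; 0; 0; 0]];
  [:: [:: 1; (2/3); (-1/3); (1/3); (-2/3); (1/3); (1/3); (1/3); (-2/3); (-1/3); (-1/3); (1/3)];
    [:: 0; 1; (-1/2); (1/2); (-1/4); (-1/4); (-1/4); (-1/4); (1/2); (-1/8); (-1/8); (1/8)];
    [:: 0; 0; 1; (1/2); (1/2); (-1/2); (-1/2); (-1/2); 0; (1/4); (1/4); (-1/4)];
    [:: 0; 0; 0; 1; (1/5); (-1/5); (1/5); (-1/5); (2/5); (1/2); (1/2); (-1/2)];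
    [:: 0; 0; 0; 0; 1; (-9/19); (9/19); (-9/19); (8/19); (-5/38); (-5/38); (5/38)];
    [:: 0; 0; 0; 0; 0; 1; (5/14); (-5/14); (-2/7); (3/7); (3/7); (-3/7)];
    [:: 0; 0; 0; 0; 0; 0; 1; (5/9); (4/9); (1/9); (1/9); (-1/9)];
    [:: 0; 0; 0; 0; 0; 0; 0; 1; (-1); (-1/4); (-1/4); (1/4)];
    [:: 0; 0; 0; 0; 0; 0; 0; 0; 0; 1; (-1/3); (1/3)];
    [:: 0; 0; 0; 0; 0; 0; 0; 0; 0; 0; 1; (1/2)];
    [:: 0; 0; 0; 0; 0; 0; 0; 0; 0; 0; 0; 1];
    [:: 0; 0; 0; 0; 0; 0; 0; 0; 0; 0; 0; 0]];
  [:: [:: 1; (1/3); 0; (1/3); (-1/3); (1/3); (1/3); (1/3); (-2/3); (-1/3); (-1/3); (1/3)];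
    [:: 0; 1; 0; (5/8); (-1/4); (-1/2); (-1/2); (-1/2); (1/4); (1/8); (1/8); (-1/8)];
    [:: 0; 0; 0; 1; (2/7); (-4/21); (4/21); (-4/21); (10/21); (3/7); (3/7); (-3/7)];
    [:: 0; 0; 0; 0; 1; (-3/8); (3/8); (-3/8); (1/2); (-1/4); (-1/4); (1/4)];
    [:: 0; 0; 0; 0; 0; 1; (5/19); (-5/19); (-4/19); (6/19); (6/19); (-6/19)];
    [:: 0; 0; 0; 0; 0; 0; 1; (5/14); (2/7); (1/4); (1/4); (-1/4)];
    [:: 0; 0; 0; 0; 0; 0; 0; 1; (-4/9); (-7/18); (-7/18); (7/18)];
    [:: 0; 0; 0; 0; 0; 0; 0; 0; 1; (-1/4); (-1/4); (1/4)];
    [:: 0; 0; 0; 0; 0; 0; 0; 0; 0; 1; (-1/3); (1/3)];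
    [:: 0; 0; 0; 0; 0; 0; 0; 0; 0; 0; 1; (1/2)];
    [:: 0; 0; 0; 0; 0; 0; 0; 0; 0; 0; 0; 1];
    [:: 0; 0; 0; 0; 0; 0; 0; 0; 0; 0; 0; 0]];
  [:: [:: 1; (2/3); (-2/3); (1/3); (-2/3); (2/3); (2/3); (1/3); (-1/3); (-1/3); (-1/3); (1/3)];
    [:: 0; 1; (-1/4); (1/2); (-1/4); (-1/2); (-1/2); (-1/4); (1/4); (-1/8); (-1/8); (1/8)];
    [:: 0; 0; 1; (2/5); (1/5); (-2/5); (-2/5); (-3/5); (-1/5); (1/2); (1/2); (-1/2)];
    [:: 0; 0; 0; 1; (4/13); (-3/13); (2/13); (-2/13); (6/13); (5/13); (5/13); (-5/13)];
    [:: 0; 0; 0; 0; 1; (-2/7); (1/2); (-1/2); (4/7); (-1/7); (-1/7); (1/7)];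
    [:: 0; 0; 0; 0; 0; 1; 0; 0; (-4/9); (1/9); (1/9); (-1/9)];
    [:: 0; 0; 0; 0; 0; 0; 1; 1; 0; 0; 0; 0];
    [:: 0; 0; 0; 0; 0; 0; 0; 0; 1; (-1/4); (-1/4); (1/4)];
    [:: 0; 0; 0; 0; 0; 0; 0; 0; 0; 1; (-1/3); (1/3)];
    [:: 0; 0; 0; 0; 0; 0; 0; 0; 0; 0; 1; (1/2)];
    [:: 0; 0; 0; 0; 0; 0; 0; 0; 0; 0; 0; 1];
    [:: 0; 0; 0; 0; 0; 0; 0; 0; 0; 0; 0; 0]];
  [:: [:: 1; (1/2); (-1/2); (1/4); (-1/2); (1/2); (1/2); (1/2); (-1/2); (-1/2); (-1/2); (1/2)];
    [:: 0; 1; (-1/3); (1/2); (-1/3); (-1/3); (-1/3); (-1/3); (1/3); 0; 0; 0];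
    [:: 0; 0; 1; (3/8); (1/4); (-1/2); (-1/2); (-1/2); (-1/4); (3/8); (3/8); (-3/8)];
    [:: 0; 0; 0; 1; (6/13); (-4/13); (4/13); (-4/13); (10/13); (1/13); (1/13); (-9/13)];
    [:: 0; 0; 0; 0; 1; (-5/14); (5/14); (-5/14); (3/7); (-1/7); (-1/7); (5/14)];
    [:: 0; 0; 0; 0; 0; 1; (3/11); (-3/11); (-2/11); (3/11); (3/11); (-4/11)];
    [:: 0; 0; 0; 0; 0; 0; 1; (3/8); (1/4); (5/16); (5/16); (-3/16)];
    [:: 0; 0; 0; 0; 0; 0; 0; 1; (-2/5); (-1/2); (-1/2); (3/10)];
    [:: 0; 0; 0; 0; 0; 0; 0; 0; 1; 0; 0; (1/2)];
    [:: 0; 0; 0; 0; 0; 0; 0; 0; 0; 1; (-1); 0];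
    [:: 0; 0; 0; 0; 0; 0; 0; 0; 0; 0; 0; 1];
    [:: 0; 0; 0; 0; 0; 0; 0; 0; 0; 0; 0; 0]];
  [:: [:: 1; (1/2); (-1/2); (1/4); (-1/2); (1/2); (1/2); (1/2); (-1/2); (-1/2); (-1/2); (1/2)];
    [:: 0; 1; (-1/2); (3/4); 0; (-1/2); 0; (-1/2); 1; 0; 0; 0];
    [:: 0; 0; 1; (1/2); (2/5); (-3/5); (-2/5); (-3/5); 0; (2/5); (2/5); (-2/5)];
    [:: 0; 0; 0; 1; 0; 0; 0; 0; 0; (1/2); (1/2); (-1/2)];
    [:: 0; 0; 0; 0; 1; (-1/4); (1/4); (-1/4); 0; (-1/4); (-1/4); (1/4)];
    [:: 0; 0; 0; 0; 0; 1; (1/3); (-1/3); 0; (1/3); (1/3); (-1/3)];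
    [:: 0; 0; 0; 0; 0; 0; 1; (1/2); 0; (1/4); (1/4); (-1/4)];
    [:: 0; 0; 0; 0; 0; 0; 0; 1; 0; (-1/2); (-1/2); (1/2)];
    [:: 0; 0; 0; 0; 0; 0; 0; 0; 0; 1; (-1/3); (1/3)];
    [:: 0; 0; 0; 0; 0; 0; 0; 0; 0; 0; 1; (1/2)];
    [:: 0; 0; 0; 0; 0; 0; 0; 0; 0; 0; 0; 1];
    [:: 0; 0; 0; 0; 0; 0; 0; 0; 0; 0; 0; 0]];
  [:: [:: 1; (2/3); (-2/3); (1/3); (-1/3); (1/3); (2/3); (2/3); (-1/3); (-2/3); (-2/3); (2/3)];
    [:: 0; 1; (-1/4); (1/2); (-1/2); (-1/4); (-1/2); (-1/2); (1/4); (1/8); (1/8); (-1/8)];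
    [:: 0; 0; 1; (2/5); (2/5); (-3/5); (-2/5); (-2/5); (-1/5); (3/10); (3/10); (-3/10)];
    [:: 0; 0; 0; 1; (3/13); (-2/13); (2/13); (-3/13); (6/13); (6/13); (6/13); (-6/13)];
    [:: 0; 0; 0; 0; 1; (-4/19); (4/19); (-1); (12/19); (-1/19); (-1/19); (1/19)];
    [:: 0; 0; 0; 0; 0; 1; (5/14); 0; (-2/7); (1/4); (1/4); (-1/4)];
    [:: 0; 0; 0; 0; 0; 0; 1; 0; (4/9); (7/18); (7/18); (-7/18)];
    [:: 0; 0; 0; 0; 0; 0; 0; 0; 1; (-1/4); (-1/4); (1/4)];
    [:: 0; 0; 0; 0; 0; 0; 0; 0; 0; 1; (-1/3); (1/3)];
    [:: 0; 0; 0; 0; 0; 0; 0; 0; 0; 0; 1; (1/2)];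
    [:: 0; 0; 0; 0; 0; 0; 0; 0; 0; 0; 0; 1];
    [:: 0; 0; 0; 0; 0; 0; 0; 0; 0; 0; 0; 0]];
  [:: [:: 1; (1/2); (-1/2); (1/4); (-1/2); (1/2); (1/2); (1/2); (-1/2); (-1/2); (-1/2); (1/2)];
    [:: 0; 1; (-1/2); (1/4); (-1/2); 0; (-1/2); (-1/2); 0; 0; 0; 0];
    [:: 0; 0; 1; (3/10); (1/5); (-2/5); (-3/5); (-3/5); (-2/5); (2/5); (2/5); (-2/5)];
    [:: 0; 0; 0; 1; (1/4); (-1/12); (1/12); (-1/3); (1/3); (1/2); (1/2); (-1/2)];
    [:: 0; 0; 0; 0; 1; (-1/3); (1/3); (-4/9); (4/9); (-2/9); (-2/9); (2/9)];
    [:: 0; 0; 0; 0; 0; 1; (1/2); 0; 0; (1/4); (1/4); (-1/4)];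
    [:: 0; 0; 0; 0; 0; 0; 1; 0; 0; (1/2); (1/2); (-1/2)];
    [:: 0; 0; 0; 0; 0; 0; 0; 1; (-1); (-1/4); (-1/4); (1/4)];
    [:: 0; 0; 0; 0; 0; 0; 0; 0; 0; 1; (-1/3); (1/3)];
    [:: 0; 0; 0; 0; 0; 0; 0; 0; 0; 0; 1; (1/2)];
    [:: 0; 0; 0; 0; 0; 0; 0; 0; 0; 0; 0; 1];
    [:: 0; 0; 0; 0; 0; 0; 0; 0; 0; 0; 0; 0]];
  [:: [:: 1; (2/3); (-2/3); (1/3); (-1/3); (1/3); (1/3); (1/3); (-1/3); (-2/3); (-2/3); (2/3)];
    [:: 0; 1; (-1/4); (1/2); (-1/2); (-1/4); (-1/4); (-1/4); (1/4); (1/8); (1/8); (-1/8)];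
    [:: 0; 0; 1; (2/5); (2/5); (-3/5); (-3/5); (-3/5); (-1/5); (3/10); (3/10); (-3/10)];
    [:: 0; 0; 0; 1; (3/13); (-2/13); (3/13); (-2/13); (6/13); (6/13); (6/13); (-6/13)];
    [:: 0; 0; 0; 0; 1; (-4/19); 1; (-4/19); (12/19); (-1/19); (-1/19); (1/19)];
    [:: 0; 0; 0; 0; 0; 1; 0; (-5/14); (-2/7); (1/4); (1/4); (-1/4)];
    [:: 0; 0; 0; 0; 0; 0; 0; 1; (-4/9); (-7/18); (-7/18); (7/18)];
    [:: 0; 0; 0; 0; 0; 0; 0; 0; 1; (-1/4); (-1/4); (1/4)];
    [:: 0; 0; 0; 0; 0; 0; 0; 0; 0; 1; (-1/3); (1/3)];
    [:: 0; 0; 0; 0; 0; 0; 0; 0; 0; 0; 1; (1/2)];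
    [:: 0; 0; 0; 0; 0; 0; 0; 0; 0; 0; 0; 1];
    [:: 0; 0; 0; 0; 0; 0; 0; 0; 0; 0; 0; 0]];
  [:: [:: 1; (1/3); (-2/3); 0; (-2/3); (2/3); (2/3); 1; (-2/3); (-2/3); (-2/3); (2/3)];
    [:: 0; 1; (-1/2); (3/8); (-1/2); (-1/4); (-1/4); 0; (1/4); (-1/8); (-1/8); (1/8)];
    [:: 0; 0; 1; (1/4); 0; (-1/2); (-1/2); 0; (-1/2); (1/4); (1/4); (-1/4)];
    [:: 0; 0; 0; 1; (1/5); (-1/5); (1/5); 0; (2/5); (2/5); (2/5); (-2/5)];
    [:: 0; 0; 0; 0; 1; (-9/19); (9/19); 0; (8/19); (-7/19); (-7/19); (7/19)];
    [:: 0; 0; 0; 0; 0; 1; (5/14); 0; (-2/7); (1/4); (1/4); (-1/4)];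
    [:: 0; 0; 0; 0; 0; 0; 1; 0; (4/9); (7/18); (7/18); (-7/18)];
    [:: 0; 0; 0; 0; 0; 0; 0; 0; 1; (-1/4); (-1/4); (1/4)];
    [:: 0; 0; 0; 0; 0; 0; 0; 0; 0; 1; (-1/3); (1/3)];
    [:: 0; 0; 0; 0; 0; 0; 0; 0; 0; 0; 1; (1/2)];
    [:: 0; 0; 0; 0; 0; 0; 0; 0; 0; 0; 0; 1];
    [:: 0; 0; 0; 0; 0; 0; 0; 0; 0; 0; 0; 0]]].

Definition cert_d_l : seq (seq rat) :=
  [:: [:: 4; 3; (8/3); (21/8); (16/7); (19/12); (28/19); (9/7); (8/9); (1/2); 1; 0];
  [:: 4; 3; (8/3); (21/8); (16/7); (19/12); (28/19); (9/7); (8/9); (3/2); (4/3); 0];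
  [:: 4; 3; (8/3); (13/8); (28/13); (11/7); (16/11); (5/4); (4/5); 1; 1; 0];
  [:: 3; (8/3); 2; (5/2); (19/10); (28/19); (9/7); (8/9); (3/2); (4/3); 1; 0];
  [:: 3; (8/3); (21/8); (16/7); (19/12); (28/19); (9/7); (8/9); (3/2); (4/3); 1; 0];
  [:: 3; (8/3); (5/2); (13/5); (28/13); (9/7); 1; (8/9); (3/2); (4/3); 1; 0];
  [:: 4; 3; (8/3); (13/8); (28/13); (11/7); (16/11); (5/4); (4/5); 1; 1; 0];
  [:: 4; 2; (5/2); 2; (8/5); (3/2); (4/3); 1; (3/2); (4/3); 1; 0];
  [:: 3; (8/3); (5/2); (13/5); (19/13); (28/19); (9/7); (8/9); (3/2); (4/3); 1; 0];
  [:: 4; 2; (5/2); (12/5); (9/4); (4/3); 1; (8/9); (3/2); (4/3); 1; 0];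
  [:: 3; (8/3); (5/2); (13/5); (19/13); (28/19); (9/7); (8/9); (3/2); (4/3); 1; 0];
  [:: 3; (8/3); 2; (5/2); (19/10); (28/19); (9/7); (8/9); (3/2); (4/3); 1; 0]].

(* Row [k] of [cert_F_l] is the [f] of a decomposition
   [- G = f f^T + L^T (diag d) L] with [L = cert_L_l[k]] and [d = cert_d_l[k] >= 0]. *)
Definition cert_check : bool :=
  [&& intmat_l 12 cert_F_l, mulmm_l 12 cert_Finv_l cert_F_l == id_l 12,
      int_l 12 (sub_l 12 (mulmv_l 12 cert_F_l (nth [::] rep_l 2)) (nseq 12 (1/2))) &
      all (fun k => let f := nth [::] cert_F_l k in
             let L := nth [::] cert_L_l k in let d := nth [::] cert_d_l k in
             all (fun i => 0 <= d`_i) (iota 0 12) &&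
             (addm_l 12 (outer_l 12 f) (mulmm_l 12 (mulmm_l 12 (tr_l 12 L) (diag_l 12 d)) L)
                == oppm_l 12 gram_l)) (iota 0 12)].

Lemma cert_ok : cert_check.
Proof. by vm_compute. Qed.

Definition signs_check : bool :=
  all (fun t => let y := mulmv_l 12 cert_Finv_l t in
         ~~ int_l 12 (sub_l 12 y (nth [::] rep_l 2)) || (dot_l 12 y (mulmv_l 12 gram_l y) != -1))
    (signs 12).

Lemma signs_ok : signs_check.
Proof. by vm_compute. Qed.

Lemma cert_F_half y : in_Omega (y - rep 2) -> intmx (mx cert_F_l *m y - cv (nseq 12 (1/2))).
Proof.
move=> Hy2; have /and4P [F_int _ F_rep2 _] := cert_ok.
have -> : mx cert_F_l *m y - cv (nseq 12 (1/2)) = mx cert_F_l *m (y - rep 2)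
    + cv (sub_l 12 (mulmv_l 12 cert_F_l (nth [::] rep_l 2)) (nseq 12 (1/2))).
  by rewrite colvB colv_mulmv mulmxBr addrA subrK.
exact: intmxD (intmxM (intmat_lP F_int) Hy2) (elimT (int_lP _ _) F_rep2).
Qed.

Lemma cert_F_sqr_le1 y k : bform G y y = -1 -> (mx cert_F_l *m y) k 0 ^+ 2 <= 1.
Proof.
move=> Ny; have /and4P [_ _ _ /allP F_ldl] := cert_ok.
have /andP [d_ge0 /eqP E] := F_ldl k (mem_iota_ord k).
set f := nth [::] cert_F_l k; set L := nth [::] cert_L_l k; set d := nth [::] cert_d_l k.
have d_ge0' j : 0 <= (cv d)^T 0 j by rewrite !mxE; apply: all_iota_ord d_ge0.
have GE : - G = cv f *m (cv f)^T + (mx L)^T *m diag_mx (cv d)^T *m mx L.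
  by rewrite Omega22_gramE -sqmxN -E sqmxD sqmx_outer !sqmxM sqmx_tr sqmx_diag.
have := sqr_le_of_ldl d_ge0' GE y; rewrite Ny opprK.
suff -> : ((cv f)^T *m y) 0 0 = (mx cert_F_l *m y) k 0 by [].
by rewrite !mxE; apply: eq_bigr => j _; rewrite !mxE.
Qed.

(* [F y] is one of the [2^12] sign vectors, and [y = F^-1 (F y)] is then excluded by [signs_ok]. *)
Lemma rep2_not_norm : ~ coset_has_norm G (rep 2) (-1).
Proof.
case=> y Hy2 Ny; have /and4P [_ /eqP FinvF _ _] := cert_ok.
pose F := mx cert_F_l.
have Fy_sign k : ((F *m y) k 0 == 1/2) || ((F *m y) k 0 == - (1/2)).
  apply: half_int_sqr_le1 (cert_F_sqr_le1 k Ny).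
  have := cert_F_half Hy2 k 0.
  by rewrite mxE [(- _ : 'cV[rat]_12) _ _]mxE colvE nth_nseq ltn_ord.
pose t := vec_l 12 (fun k => (F *m y) (inord k) 0).
have Ht : cv t = F *m y.
  by rewrite colv_vec_l; apply/matrixP => k j; rewrite !mxE inord_val (ord1 j).
have t_signs : t \in signs 12.
  rewrite -(size_mkseq (fun k => (F *m y) (inord k) 0) 12); apply: mem_signs.
  by apply/allP => _ /mapP [k _ ->]; apply: Fy_sign.
have Ey : y = cv (mulmv_l 12 cert_Finv_l t).
  by rewrite colv_mulmv Ht mulmxA -sqmxM FinvF sqmx_id mul1mx.
case/orP: (allP signs_ok t t_signs) => [/negP | /eqP]; apply.
  by apply/int_lP; rewrite colvB -Ey.
by rewrite -bform_l -Omega22_gramE -Ey.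
Qed.

Lemma class_card_of_orbit r (o : seq (seq rat)) :
    in_dual r -> uniq o -> all (reduced_l 12) o -> {in o, forall l, disc_equiv r (cv l)} ->
    (forall x, in_dual x -> disc_equiv r x -> exists2 l, l \in o & in_Omega (x - cv l)) ->
  disc_class_card r (size o).
Proof.
move=> Hr o_uniq /allP o_reduced o_equiv o_complete; exists (map cv o); split.
- by rewrite size_map.
- move=> _ /mapP [l Hl ->]; split; last exact: o_equiv.
  exact (disc_rel_dual Omega22_gram_int Omega22_gram_det Hr (o_equiv _ Hl)).
- move=> a b lt_a lt_b neq_ab; rewrite !(nth_map [::]) // => Hab.
  apply/neq_ab/eqP; rewrite -(nth_uniq [::] lt_a lt_b o_uniq); apply/eqP.
  by apply: reduced_l_inj Hab; apply: o_reduced; apply: mem_nth.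
- move=> x Hx Erx; have [l Hl Hxl] := o_complete x Hx Erx.
  by exists (cv l); first exact: map_f.
Qed.

Lemma orbit_equiv_rep i l : (i < 6)%N -> l \in nth [::] orbits_l i -> disc_equiv (rep i) (cv l).
Proof. by move=> lt_i6; rewrite (nth_map [::]) //; apply: orbit_l_equiv. Qed.

Lemma dual_orbit v : in_dual v -> ~ in_Omega v ->
  exists j : 'I_6, exists2 l, l \in nth [::] orbits_l j & in_Omega (v - cv l).
Proof.
move=> Hv Nv; have [l] := dual_congr_classes Hv; rewrite /classes_l in_cons.
case/orP => [/eqP -> | /flattenP [o /(nthP [::]) [j lt_j <-] Hl]] Hvl.
  by case: Nv; rewrite colv0 subr0 in Hvl.
by rewrite size_map in lt_j; exists (Ordinal lt_j), l.
Qed.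

(* The value of [q] mod [2] separates all classes except the pairs [{0, 1}] and [{2, 3}]. *)
Definition q_sep_check : bool :=
  all (fun i => all (fun j =>
    (((nth (0%N, 0, 0%N) class_table i).1.2 - (nth (0%N, 0, 0%N) class_table j).1.2) / 2
        \is a Num.int) ==> (i == j) || ((i, j) \in [:: (0, 1); (1, 0); (2, 3); (3, 2)]%N))
    (iota 0 6)) (iota 0 6).

Lemma q_sep_ok : q_sep_check.
Proof. by vm_compute. Qed.

Lemma rep_sep i j : (i < 6)%N -> (j < 6)%N -> disc_equiv (rep i) (rep j) -> i = j.
Proof.
move=> lt_i6 lt_j6 Eij.
have := disc_q_diff (disc_rel_q Omega22_gram_sym Omega22_gram_int Omega22_gram_even
  Omega22_gram_det (rep_dual lt_i6) Eij (rep_q lt_i6)) (rep_q lt_j6).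
have /allP/(_ j) := allP q_sep_ok i (etrans (mem_iota 0 6 i) lt_i6).
move=> /(_ (etrans (mem_iota 0 6 j) lt_j6))/implyP q_sep /q_sep /orP [/eqP // | ].
have not10 : ~ disc_equiv (rep 1) (rep 0).
  by move/(disc_rel_twice Omega22_gram_det)/(_ rep1_twice); exact: rep0_not_twice.
have not32 : ~ disc_equiv (rep 3) (rep 2).
  by move/disc_rel_norm/(_ rep3_norm); exact: rep2_not_norm.
have sym := disc_rel_sym Omega22_gram_det.
rewrite !inE => /or4P [] /eqP [E_i E_j]; rewrite {}E_i {}E_j in Eij; exfalso.
- by apply/not10/sym.
- exact: not10.
- by apply/not32/sym.
- exact: not32.
Qed.

Lemma rep_orbit_complete i x : (i < 6)%N -> in_dual x -> disc_equiv (rep i) x ->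
  exists2 l, l \in nth [::] orbits_l i & in_Omega (x - cv l).
Proof.
move=> lt_i6 Hx Eix.
have Nx : ~ in_Omega x by move/(disc_rel_lattice Omega22_gram_det Eix); apply: rep_not_lattice.
have [j [l Hl Hxl]] := dual_orbit Hx Nx.
have Ejx := disc_rel_translate (orbit_equiv_rep (ltn_ord j) Hl) Hxl.
have eq_ij := rep_sep lt_i6 (ltn_ord j) (disc_rel_trans Eix (disc_rel_sym Omega22_gram_det Ejx)).
by exists l; rewrite ?eq_ij.
Qed.

Lemma rep_class_card i : (i < 6)%N -> disc_class_card (rep i) (nth (0%N, 0, 0%N) class_table i).2.
Proof.
move=> lt_i6; have lt_i : (i < size orbits_l)%N by rewrite size_map.
have o_orbit := mem_nth [::] lt_i.
have -> : (nth (0%N, 0, 0%N) class_table i).2 = size (nth [::] orbits_l i).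
  by rewrite -(nth_map [::] 0%N size lt_i) size_orbits_l (nth_map (0%N, 0, 0%N)).
apply: class_card_of_orbit (rep_dual lt_i6) _ _ (fun l => orbit_equiv_rep lt_i6) _.
- exact: (@map_uniq _ _ key) (allP orbits_l_uniq _ o_orbit).
- exact: allP orbits_l_reduced _ o_orbit.
- by move=> x; apply: rep_orbit_complete.
Qed.

Theorem proposition3p4 :
  exists r : 'I_6 -> 'cV[rat]_12,
    [/\ (forall i, in_dual (r i) /\ ~ in_Omega (r i)),
        (forall v, in_dual v -> ~ in_Omega v ->
           exists! i : 'I_6, disc_equiv (r i) v) &
        (forall i : 'I_6,
           let d := nth (0%N, 0, 0%N)
             [:: (2%N, 0, 108%N); (2%N, 0, 3%N); (2%N, 1, 108%N);
                 (2%N, 1, 36%N); (4%N, 1/2, 384%N); (4%N, 3/2, 384%N)] i in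
           [/\ disc_order_is (r i) d.1.1,
               disc_q_is (r i) d.1.2 &
               disc_class_card (r i) d.2])].
Proof.
exists (fun i : 'I_6 => rep i); split.
- by move=> i; split; [exact: rep_dual | exact: rep_not_lattice].
- move=> v Hv Nv; have [j [l Hl Hvl]] := dual_orbit Hv Nv.
  have Ejv := disc_rel_translate (orbit_equiv_rep (ltn_ord j) Hl) Hvl.
  exists j; split=> // k Ekv; apply/val_inj/(rep_sep (ltn_ord j) (ltn_ord k)).
  exact: disc_rel_trans Ejv (disc_rel_sym Omega22_gram_det Ekv).
- by move=> i; split; [exact: rep_order | exact: rep_q | exact: rep_class_card].
Qed.
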